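(* Let $\mathcal{C}$ be a linear code of length $n$ over $\mathbb{F}_{q^m}$. The generalized subfield subcodes of $\mathcal{C}$ (over all choices of $\mathcal{B},u,f,\pi$) are exactly the codes obtained as follows: choose nonzero $a_1,\dots,a_n\in\mathbb{F}_{q^m}$ and let $V_i=\mathbb{F}_qa_i$ (an $\mathbb{F}_q$-subspace of dimension 1); set $\mathcal{C}'=\mathcal{C}\cap(V_1\times\cdots\times V_n)$; identify each $V_i$ with $\mathbb{F}_q$ via $\lambda a_i\mapsto\lambda$, giving the $\mathbb{F}_q$-linear code $C=\{(\lambda_1,\dots,\lambda_n)\in\mathbb{F}_q^n:(\lambda_1a_1,\dots,\lambda_na_n)\in\mathcal{C}'\}$; choose a permutation $\pi$ of the $n$ coordinates and return $\pi(C)$.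
   Context: For a basis $\mathcal{B}=(b_1,\dots,b_m)$ of $\mathbb{F}_{q^m}$ over $\mathbb{F}_q$, $\phi_{\mathcal{B}}(\sum_ix_ib_i)=(x_1,\dots,x_m)$ and $Im_q(\mathcal{C})=\{(\phi_{\mathcal{B}}(c_1)|\cdots|\phi_{\mathcal{B}}(c_n)):c\in\mathcal{C}\}\subseteq(\mathbb{F}_q^m)^n$. For $f=(f_1,\dots,f_n)\in GL_q(m)^n$ ($\mathbb{F}_q$-linear automorphisms of $\mathbb{F}_q^m$) and a permutation $\pi$ of $\{1,\dots,n\}$, $mon=\pi\circ f$ applies $f_i$ to the $i$-th block and then permutes the blocks by $\pi$. For $u=(u_1,\dots,u_n)\in\{1,\dots,m\}^n$ and $D\subseteq(\mathbb{F}_q^m)^n$, with $x_{j,l}$ the $l$-th coordinate of block $j$ of $x$, $S_u(D)=\{(x_{1,u_1},\dots,x_{n,u_n}):x\in D,\ x_{j,l}=0\ \forall j,\ \forall l\neq u_j\}\subseteq\mathbb{F}_q^n$. The generalized subfield subcode of $\mathcal{C}$ relative to $\mathcal{B},u,mon$ is $S_u(mon(Im_q(\mathcal{C})))$. *)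

From HB Require Import structures.
From mathcomp Require Import all_boot all_order all_algebra all_fingroup all_field.
Set Implicit Arguments. Unset Strict Implicit. Unset Printing Implicit Defensive.
Import GRing.Theory.
Local Open Scope ring_scope.

(* F plays F_q (finite field), L plays F_{q^m}, a finite extension of F of
   degree m = \dim {:L}.  Vectors of (F^m)^n are encoded as n x m matrices:
   row j is block j, entry (j,l) is x_{j,l}. *)

Section Defs.
Variables (F : finFieldType) (L : fieldExtType F) (n : nat).
Local Notation m := (\dim {:L}%VS).

Definition ImB (B : m.-tuple L) (c : 'rV[L]_n) : 'M[F]_(n, m) :=
  \matrix_(j, l) coord B l (c 0 j).

(* mon = pi o f : apply f_j (an invertible F-linear map, acting on row
   vectors by right multiplication) to block j, then send block j to
   position pi j. *)
Definition mon (f : 'I_n -> 'M[F]_m) (p : 'S_n) (x : 'M[F]_(n, m))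
  : 'M[F]_(n, m) :=
  \matrix_(i, l) ((row ((p^-1)%g i) x *m f ((p^-1)%g i)) 0 l).

Definition gss (C : {vspace 'rV[L]_n}) (B : m.-tuple L)
  (u : 'I_n -> 'I_m) (f : 'I_n -> 'M[F]_m) (p : 'S_n) (y : 'rV[F]_n) : Prop :=
  exists c : 'rV[L]_n, c \in C /\
    (forall j l, l != u j -> mon f p (ImB B c) j l = 0) /\
    y = \row_j mon f p (ImB B c) j (u j).

Definition is_gen_subfield_subcode (C : {vspace 'rV[L]_n})
  (D : 'rV[F]_n -> Prop) : Prop :=
  exists (B : m.-tuple L) (u : 'I_n -> 'I_m) (f : 'I_n -> 'M[F]_m) (p : 'S_n),
    basis_of fullv B /\ (forall j, f j \in unitmx) /\
    (forall y, D y <-> gss C B u f p y).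

(* permutation of coordinates: entry i moves to position p i *)
Definition permv (p : 'S_n) (v : 'rV[F]_n) : 'rV[F]_n :=
  \row_i v 0 ((p^-1)%g i).

(* C_a = { lambda in F_q^n | (lambda_1 a_1, ..., lambda_n a_n) in C }
   (= the identification of C /\ (F a_1 x ... x F a_n) with a code over F) *)
Definition restr_code (C : {vspace 'rV[L]_n}) (a : 'I_n -> L)
  (lam : 'rV[F]_n) : Prop :=
  (\row_i (lam 0 i *: a i)) \in C.

Definition is_constructed_code (C : {vspace 'rV[L]_n})
  (D : 'rV[F]_n -> Prop) : Prop :=
  exists (a : 'I_n -> L) (p : 'S_n),
    (forall i, a i != 0) /\
    (forall y, D y <-> exists lam, restr_code C a lam /\ y = permv p lam).

End Defs.

From HB Require Import structures.
From mathcomp Require Import all_boot all_order all_algebra all_fingroup all_field.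

(* A codeword c contributes to S_u(mon(Im_q(C))) exactly when every block
   phi_B(c_k) f_k is a multiple lambda e_{u(pi k)} of a standard vector, i.e.
   c_k = lambda a_k with a_k := phi_B^{-1}(e_{u(pi k)} f_k^{-1}) != 0; so the
   subcode is pi(C_a).  Conversely, for nonzero weights a_k, take u constant
   equal to the index of some basis vector b_0 and f_k the matrix of
   multiplication by b_0 / a_k, which sends a_k to b_0. *)

Set Implicit Arguments. Unset Strict Implicit. Unset Printing Implicit Defensive.
Import GRing.Theory.
Local Open Scope ring_scope.
Import passmx.

Lemma delta_mx_neq0 (R : nzRingType) {m n} (i : 'I_m) (j : 'I_n) :
  delta_mx i j != 0 :> 'M[R]_(m, n).
Proof.
by apply/eqP => /matrixP/(_ i j)/eqP; rewrite !mxE !eqxx oner_eq0.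
Qed.

Section MulrMatrix.
Variables (F : fieldType) (L : fieldExtType F).
Local Notation m := (\dim {:L}%VS).
Variables (B : m.-tuple L).
Hypothesis B_basis : basis_of fullv B.

Lemma rVof_mulr x t : rVof B (x * t) = rVof B x *m mxof B B (amulr t).
Proof. by rewrite -(rVof_app B B_basis) lfunE. Qed.

Lemma mxof_amulr_unit t : t != 0 -> mxof B B (amulr t) \in unitmx.
Proof.
move=> t_nz; have /mulmx1_unit[] // : mxof B B (amulr t) *m mxof B B (amulr t^-1) = 1%:M.
rewrite -(mxof_comp B B B_basis) -(mxof1 (basis_free B_basis)); congr (mxof B B _).
by apply/lfunP => x; rewrite comp_lfunE !lfunE /= mulfK.
Qed.

End MulrMatrix.

Section GenSubfieldSubcode.
Variables (F : finFieldType) (L : fieldExtType F) (n : nat).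
Local Notation m := (\dim {:L}%VS).
Variables (C : {vspace 'rV[L]_n}) (B : m.-tuple L).
Hypothesis B_basis : basis_of fullv B.

Lemma mon_ImBE f (p : 'S_n) c k l :
  mon f p (ImB B c) (p k) l = (rVof B (c 0 k) *m f k) 0 l.
Proof.
rewrite mxE permK; congr ((_ *m _) 0 l).
by apply/rowP => l'; rewrite !mxE.
Qed.

Lemma gssE u f p y :
  gss C B u f p y <-> exists2 c, c \in C &
    forall k, rVof B (c 0 k) *m f k = y 0 (p k) *: delta_mx 0 (u (p k)).
Proof.
split.
  case=> c [cC [off_u ->]]; exists c => // k; apply/rowP => l.
  rewrite -(mon_ImBE f p); move: (mon f p _) off_u => M off_u.
  rewrite !mxE eqxx; case: eqP => [->|/eqP ne_l] /=; first by rewrite mulr1.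
  by rewrite mulr0 off_u.
case=> c cC Hc; exists c; split => //; split.
  move=> j l ne_l; rewrite -(permKV p j) mon_ImBE Hc !mxE.
  by rewrite permKV (negbTE ne_l) mulr0.
by apply/rowP => j; rewrite mxE -(permKV p j) mon_ImBE Hc !mxE !eqxx mulr1.
Qed.

Lemma permv_eqE (p : 'S_n) (lam y : 'rV[F]_n) :
  (y = permv p lam) <-> (lam = \row_k y 0 (p k)).
Proof.
by split=> ->; apply/rowP => i; rewrite !mxE ?permK ?permKV.
Qed.

Section Weights.
Variables (u : 'I_n -> 'I_m) (f : 'I_n -> 'M[F]_m) (p : 'S_n) (a : 'I_n -> L).
Hypothesis f_unit : forall k, f k \in unitmx.
Hypothesis rVof_weight : forall k, rVof B (a k) *m f k = delta_mx 0 (u (p k)).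

Lemma gss_restr_codeE y :
  gss C B u f p y <-> exists lam, restr_code C a lam /\ y = permv p lam.
Proof.
have rVof_f_inj k : injective (fun x => rVof B x *m f k).
  by move=> x x' /(can_inj (mulmxK (f_unit k)))/(can_inj (rVofK B_basis)).
pose lam := \row_k y 0 (p k).
have rVof_scaled k : rVof B ((\row_k (lam 0 k *: a k)) 0 k) *m f k
                     = y 0 (p k) *: delta_mx 0 (u (p k)).
  by rewrite !mxE linearZ -scalemxAl rVof_weight.
have weightsE (c : 'rV[L]_n) :
    (forall k, rVof B (c 0 k) *m f k = y 0 (p k) *: delta_mx 0 (u (p k)))
    <-> c = \row_k (lam 0 k *: a k).
  split=> [Hc | -> //]; apply/rowP => k.
  by apply: (rVof_f_inj k); rewrite /= Hc rVof_scaled.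
apply: (iff_trans (gssE u f p y)); split.
  case=> c cC /weightsE c_eq; exists lam.
  by split; [rewrite /restr_code -c_eq | apply/permv_eqE].
case=> lam' [lam'_C /permv_eqE lam'_eq]; exists (\row_k (lam 0 k *: a k)).
  by move: lam'_C; rewrite lam'_eq.
exact/weightsE.
Qed.

End Weights.

Lemma exists_weights u f (p : 'S_n) : (forall k, f k \in unitmx) ->
  exists2 a : 'I_n -> L, (forall k, a k != 0) &
    (forall k, rVof B (a k) *m f k = delta_mx 0 (u (p k))).
Proof.
move=> f_unit; pose a k := vecof B (delta_mx 0 (u (p k)) *m invmx (f k)).
have rVof_a k : rVof B (a k) *m f k = delta_mx 0 (u (p k)).
  by rewrite vecofK // mulmxKV.
exists a => // k; apply: contraTneq (delta_mx_neq0 F (0 : 'I_1) (u (p k))) => a0.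
by rewrite negbK -(rVof_a k) a0 linear0 mul0mx.
Qed.

Lemma exists_transforms (p : 'S_n) (a : 'I_n -> L) : (forall k, a k != 0) ->
  exists u f, (forall k, f k \in unitmx) /\
    (forall k, rVof B (a k) *m f k = delta_mx 0 (u (p k))).
Proof.
move=> a_nz; pose i0 : 'I_m := Ordinal (adim_gt0 {:L}%AS).
have b0_nz : B`_i0 != 0.
  by apply: free_not0 (basis_free B_basis) (mem_nth _ _); rewrite size_tuple.
exists (fun=> i0), (fun k => mxof B B (amulr (B`_i0 / a k))); split=> k.
  by apply: mxof_amulr_unit; rewrite // mulf_neq0 ?invr_eq0.
by rewrite -rVof_mulr // mulrC divfK // rVofE.
Qed.

End GenSubfieldSubcode.

Theorem proposition8 (F : finFieldType) (L : fieldExtType F) (n : nat)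
  (C : {vspace 'rV[L]_n}) (D : 'rV[F]_n -> Prop) :
  is_gen_subfield_subcode C D <-> is_constructed_code C D.
Proof.
split.
  case=> B [u [f [p [B_basis [f_unit HD]]]]].
  have [a a_nz rVof_a] := exists_weights B_basis u p f_unit.
  exists a, p; split=> // y.
  exact: iff_trans (HD y) (gss_restr_codeE C B_basis f_unit rVof_a y).
case=> a [p [a_nz HD]].
have B_basis := vbasisP (fullv : {vspace L}).
have [u [f [f_unit rVof_a]]] := exists_transforms B_basis p a_nz.
exists (vbasis fullv), u, f, p; split=> //; split=> // y.
exact: iff_trans (HD y) (iff_sym (gss_restr_codeE C B_basis f_unit rVof_a y)).
Qed.
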